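(* Let $d\ge2$ and let $G$ be a DAG or MAG on $\{Y,X_1,\dots,X_d\}$ whose skeleton is the cycle $Y - X_d - X_{d-1} - \cdots - X_1 - Y$, with arbitrary (admissible) edge orientations. Then $N_G=(d^2+d+2)/2$.
   Context: For $A\subseteq\{1,\dots,d\}$, $\mathbf{X}_A:=\{X_i:i\in A\}$. $\perp_G$ is d-separation (m-separation for a MAG). For $S',S''\subseteq\{1,\dots,d\}$, $S'\sim_G S''$ iff there exists $S_\cap\subseteq S'\cap S''$ with $Y\perp_G\mathbf{X}_{(S'\cup S'')\setminus S_\cap}\mid\mathbf{X}_{S_\cap}$ (separation from the empty set holds trivially); this is an equivalence relation, and $N_G$ denotes the number of its equivalence classes on the power set of $\{1,\dots,d\}$. *)

From mathcomp Require Import all_boot.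
From mathcomp Require Import boolp.
Set Implicit Arguments. Unset Strict Implicit. Unset Printing Implicit Defensive.

(* Mixed graphs (Richardson--Spirtes ancestral-graph setting) on a finite
   vertex type: directed edges u -> v (dir u v), bidirected u <-> v (bi),
   undirected u - v (und). *)
Record mgraph (V : finType) := MGraph {
  dir : rel V; bi : rel V; und : rel V }.

Section MGraph.
Variables (V : finType) (g : mgraph V).

Definition simple_mgraph : Prop :=
  (forall u v, bi g u v = bi g v u) /\ (forall u v, und g u v = und g v u) /\
  (forall u, ~~ dir g u u && ~~ bi g u u && ~~ und g u u) /\
  (forall u v, u != v -> (dir g u v + dir g v u + bi g u v + und g u v <= 1)%N).

Definition adj (u v : V) : bool := [|| dir g u v, dir g v u, bi g u v | und g u v].

Definition arrowhead (u v : V) : bool := dir g u v || bi g u v.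

Definition anc (u v : V) : bool := connect (dir g) u v.

Definition anc_set (Z : {set V}) (v : V) : bool := [exists z in Z, anc v z].

Definition mconnected (x y : V) (Z : {set V}) : Prop :=
  exists p : seq V,
    [/\ path adj x p, uniq (x :: p), last x p = y, x != y &
     forall i, (0 < i < size p)%N ->
       let s := x :: p in
       let a := nth x s i.-1 in let b := nth x s i in let c := nth x s i.+1 in
       if arrowhead a b && arrowhead c b then anc_set Z b else b \notin Z].

Definition msep (A B Z : {set V}) : Prop :=
  forall x y, x \in A -> y \in B -> ~ mconnected x y Z.

Definition is_DAG : Prop :=
  [/\ simple_mgraph, (forall u v, bi g u v = false), (forall u v, und g u v = false) &
      forall u v, dir g u v -> ~~ anc v u].

Definition ancestral : Prop :=
  [/\ forall u v, dir g u v -> ~~ anc v u,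
      forall u v, bi g u v -> ~~ anc u v &
      forall u v, und g u v -> forall w, ~~ dir g w u && ~~ bi g w u].

Definition maximal : Prop :=
  forall u v, u != v -> ~~ adj u v ->
    exists Z : {set V}, [/\ u \notin Z, v \notin Z & msep [set u] [set v] Z].

Definition is_MAG : Prop := [/\ simple_mgraph, ancestral & maximal].

End MGraph.

(* Vertices: 'I_d.+1, with ord0 = Y and i = X_i (1 <= i <= d). *)
Definition cycle_adj (d : nat) (u v : 'I_d.+1) : bool :=
  [|| (u.+1 == v :> nat), (v.+1 == u :> nat),
      ((u == 0 :> nat) && (v == d :> nat)) | ((v == 0 :> nat) && (u == d :> nat))].

(* subsets of {1,...,d}, i.e. sets of X-vertices *)
Definition Xsubsets (d : nat) : {set {set 'I_d.+1}} :=
  [set S : {set 'I_d.+1} | ord0 \notin S].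

Definition simG (d : nat) (g : mgraph 'I_d.+1) (S1 S2 : {set 'I_d.+1}) : Prop :=
  exists Sc : {set 'I_d.+1}, Sc \subset S1 :&: S2 /\
    msep g [set ord0] ((S1 :|: S2) :\: Sc) Sc.

Definition N_G (d : nat) (g : mgraph 'I_d.+1) : nat :=
  #|[set [set T in Xsubsets d | `[< simG g S T >] ] | S in Xsubsets d]|.

From mathcomp Require Import all_boot boolp zify.
Set Implicit Arguments. Unset Strict Implicit. Unset Printing Implicit Defensive.

(* A simple path from Y to a vertex a goes around the cycle, either upwards
   (Y, 1, 2, ..., a) or downwards (Y, d, d-1, ..., a).  Each inner vertex v of
   such a path is entered and left through its two cycle-neighbours, so it is a
   collider on the path iff [collider v] holds, and a collider has no
   descendant but itself.  Hence v blocks the path given Z iff v is in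
   [blockers Z] (colliders outside Z, non-colliders in Z), and Y is m-connected
   to a given Z iff a is not strictly between two blockers ([mconnected_iff]).

   It follows that S ~ T iff [core S = core T], where [core S] keeps the
   elements of S not enclosed by blockers of S ([simG_core]).  So N_G is the
   number of possible cores; [blockers] maps them bijectively onto the subsets
   D of {1..d} that agree with [collider] strictly between any two of their
   elements, and such a D is empty or fixed by its min and max
   ([card_coherent_sets]).  This gives N_G = 1 + d(d+1)/2. *)

Lemma lt0_ord n (v : 'I_n.+1) : (0 < v) = (v != ord0).
Proof. by rewrite lt0n -val_eqE. Qed.

Lemma forced_path (T : eqType) (e : rel T) (f : nat -> T) (x : T) (p : seq T) :
  (forall i y, 0 < i < size p -> e (f i) y ->
     (exists2 j, j < i & y = f j) \/ y = f i.+1) ->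
  path e x p -> uniq (x :: p) -> x = f 0 -> nth x p 0 = f 1 ->
  forall i, i <= size p -> nth x (x :: p) i = f i.
Proof.
move=> forced /(pathP x) e_p uniq_p x_f0 p0_f1.
suff follow n : n <= size p -> forall i, i <= n -> nth x (x :: p) i = f i.
  by move=> i le_i; exact: follow le_i i (leqnn i).
elim: n => [_ [|] // | n IH le_n i]; rewrite leq_eqVlt ltnS => /orP[/eqP-> | le_in].
  2: exact: IH (ltnW le_n) i le_in.
case: n IH le_n => [|n] IH le_n; first exact: p0_f1.
have fn1 : nth x (x :: p) n.+1 = f n.+1 by apply: IH => //; lia.
have e_step : e (f n.+1) (nth x p n.+1) by rewrite -fn1; exact: e_p.
have [[j lt_j fj] | //] := forced n.+1 _ le_n e_step.
(* otherwise the vertex at position n.+2 repeats the one at position j *)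
have := IH (ltnW le_n) j (ltnW lt_j); rewrite -fj -[nth x p _]/(nth x (x :: p) n.+2).
by move/eqP; rewrite nth_uniq //=; lia.
Qed.

Section Between.
Variable n : nat.
Implicit Types (D : {set 'I_n}) (x : 'I_n).

Definition has_below D x := [exists u in D, u < x].
Definition has_above D x := [exists u in D, x < u].
Definition between D x := has_below D x && has_above D x.

Lemma has_below_eq D1 D2 :
  (forall x, (x \in D1) != (x \in D2) -> between D1 x) -> has_below D1 =1 has_below D2.
Proof.
move=> diff x; apply/existsP/existsP => -[u /andP[uD ux]].
- have [m mD1 min_m] := @arg_minnP _ u (fun v => v \in D1) (fun v => nat_of_ord v) uD.
  exists m; rewrite (leq_ltn_trans (min_m u uD) ux) andbT.
  case mD2: (m \in D2) => //.
  have /andP[/existsP[w /andP[wD1 wm]] _] : between D1 m.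
    by apply: diff; rewrite mD1 mD2.
  by have := min_m w wD1; lia.
- case uD1: (u \in D1); first by exists u; rewrite uD1.
  have /andP[/existsP[w /andP[wD1 wu]] _] : between D1 u.
    by apply: diff; rewrite uD uD1.
  by exists w; rewrite wD1 (ltn_trans wu ux).
Qed.

Lemma has_above_eq D1 D2 :
  (forall x, (x \in D1) != (x \in D2) -> between D1 x) -> has_above D1 =1 has_above D2.
Proof.
move=> diff x; apply/existsP/existsP => -[u /andP[uD xu]].
- have [m mD1 max_m] := @arg_maxnP _ u (fun v => v \in D1) (fun v => nat_of_ord v) uD.
  exists m; rewrite (leq_trans xu (max_m u uD)) andbT.
  case mD2: (m \in D2) => //.
  have /andP[_ /existsP[w /andP[wD1 mw]]] : between D1 m.
    by apply: diff; rewrite mD1 mD2.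
  by have := max_m w wD1; lia.
- case uD1: (u \in D1); first by exists u; rewrite uD1.
  have /andP[_ /existsP[w /andP[wD1 uw]]] : between D1 u.
    by apply: diff; rewrite uD uD1.
  by exists w; rewrite wD1 (ltn_trans xu uw).
Qed.

Lemma between_eq D1 D2 :
  (forall x, (x \in D1) != (x \in D2) -> between D1 x) -> between D1 =1 between D2.
Proof. by move=> diff x; rewrite /between (has_below_eq diff) (has_above_eq diff). Qed.

End Between.

(* Counting the subsets [D] of {1..d} that agree with a fixed predicate [c] at
   every point strictly between two of their elements: such a [D] is empty or
   is determined by its extreme points [m <= M], being {m, M} together with
   the points of ]m, M[ satisfying [c]. *)
Section Intervals.
Variables (d : nat) (c : pred 'I_d.+1).
Implicit Types (D : {set 'I_d.+1}) (x : 'I_d.+1) (p : 'I_d.+1 * 'I_d.+1).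

Definition coherent D := [forall x, between D x ==> ((x \in D) == c x)].
Definition coherent_sets := [set D in Xsubsets d | coherent D].

Definition endpoint_pairs := [set p : 'I_d.+1 * 'I_d.+1 | 0 < p.2 <= p.1].
Definition interval_set p := [set x | [|| x == p.2, x == p.1 | (p.2 < x < p.1) && c x]].

Lemma interval_set_range p x : p \in endpoint_pairs -> x \in interval_set p -> p.2 <= x <= p.1.
Proof.
case: p => M m; rewrite !inE /= => /andP[_ le_mM].
by case/or3P => [/eqP-> | /eqP-> | /andP[/andP[mx xM] _]]; lia.
Qed.

Lemma interval_set_coherent p : p \in endpoint_pairs -> interval_set p \in coherent_sets.
Proof.
case: p => M m pP; rewrite inE [_ \in Xsubsets d]inE; apply/andP; split.
  by apply/negP => /(interval_set_range pP); move: pP; rewrite inE /=; lia.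
apply/forallP => x; apply/implyP.
case/andP => /existsP[u /andP[uI ux]] /existsP[v /andP[vI xv]].
move: (interval_set_range pP uI) (interval_set_range pP vI) => /= mu vM.
have /andP[mx xM] : m < x < M by lia.
by rewrite inE /= -!val_eqE /= mx xM (gtn_eqF mx) (ltn_eqF xM).
Qed.

Lemma interval_set_inj : {in endpoint_pairs &, injective interval_set}.
Proof.
move=> [M m] [M' m'] pP qP E.
have ends p : p.2 \in interval_set p /\ p.1 \in interval_set p.
  by rewrite !inE !eqxx orbT.
have := ends (M, m); rewrite E => -[/(interval_set_range qP) /= m_q].
move=> /(interval_set_range qP) /= M_q.
have := ends (M', m'); rewrite -E => -[/(interval_set_range pP) /= m'_p].
move=> /(interval_set_range pP) /= M'_p.
by congr pair; apply: ord_inj; lia.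
Qed.

(* ...and every nonempty coherent set is the set of its min and max. *)
Lemma coherent_interval D : D \in coherent_sets -> D != set0 ->
  D \in interval_set @: endpoint_pairs.
Proof.
rewrite !inE => /andP[D0 /forallP cohD] /set0Pn[x0 x0D].
have [m mD min_m] := @arg_minnP _ x0 (fun v => v \in D) (fun v => nat_of_ord v) x0D.
have [M MD max_M] := @arg_maxnP _ x0 (fun v => v \in D) (fun v => nat_of_ord v) x0D.
have m_gt0 : 0 < m by rewrite lt0_ord; apply: contraNneq D0 => <-.
apply/imsetP; exists (M, m); first by rewrite inE /= m_gt0; exact: max_M.
have inside (y : 'I_d.+1) : m < y < M -> (y \in D) = c y.
  move=> /andP[my yM]; apply/eqP; apply: (implyP (cohD y)); apply/andP; split.
    by apply/existsP; exists m; rewrite mD.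
  by apply/existsP; exists M; rewrite MD.
apply/setP => x; rewrite inE /=.
have [->|xm] := eqVneq x m; first by rewrite mD.
have [->|xM] := eqVneq x M; first by rewrite MD orbT.
have [xin|xout] := boolP (m < x < M); first by rewrite inside.
apply/negbTE; apply: contra xout => xD.
have := min_m x xD; have := max_M x xD; rewrite -!val_eqE /= in xm xM; lia.
Qed.

Lemma card_coherent_sets : #|coherent_sets| = #|endpoint_pairs|.+1.
Proof.
have -> : coherent_sets = set0 |: interval_set @: endpoint_pairs.
  apply/setP => D; rewrite in_setU1; apply/idP/orP => [DP | [/eqP -> | /imsetP[p pP ->]]].
  - by have [-> | D_nz] := eqVneq D set0; [left | right; exact: coherent_interval].
  - rewrite !inE; apply/forallP => x; apply/implyP => /andP[/existsP[u]].
    by rewrite inE.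
  - exact: interval_set_coherent.
rewrite cardsU1 card_in_imset; last exact: interval_set_inj.
suff /negbTE -> : set0 \notin interval_set @: endpoint_pairs by [].
by apply/imsetP => -[p _ /setP/(_ p.2)]; rewrite !inE eqxx.
Qed.

Lemma count_positive_below n a : \sum_(b < n | 0 < b <= a) 1 = minn a n.-1.
Proof.
elim: n => [|n IH]; first by rewrite big_ord0 minn0.
by rewrite big_mkcond big_ord_recr /= -big_mkcond IH; case: ifP; lia.
Qed.

Lemma card_endpoint_pairs : #|endpoint_pairs| * 2 = d.+1 * d.
Proof.
rewrite cardsE -sum1_card (eq_bigl (fun p => xpredT p.1 && (0 < p.2 <= p.1))) //.
rewrite -(pair_big_dep xpredT (fun i j : 'I_d.+1 => 0 < j <= i) (fun _ _ => 1)) /=.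
rewrite (eq_bigr (fun i : 'I_d.+1 => nat_of_ord i)); last first.
  by move=> i _; rewrite count_positive_below /=; have := ltn_ord i; lia.
by rewrite -(big_mkord xpredT id) bin2_sum bin_ffact ffactnS ffactn1.
Qed.

End Intervals.

Lemma card_classes (T U : finType) (A : {set T}) (k : T -> U) (R : T -> T -> Prop) :
  {in A &, forall S S', R S S' <-> k S = k S'} ->
  #|[set [set S' in A | `[< R S S' >]] | S in A]| = #|k @: A|.
Proof.
move=> RP; pose cls u := [set S' in A | k S' == u].
have -> : [set [set S' in A | `[< R S S' >]] | S in A] = cls @: (k @: A).
  rewrite -imset_comp; apply: eq_in_imset => S SA; apply/setP => S'; rewrite !inE /=.
  case S'A: (S' \in A) => //=; apply/asboolP/eqP => [/RP -> // | kS]; exact/RP.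
rewrite card_in_imset // => _ _ /imsetP[S SA ->] /imsetP[S' S'A ->] /setP/(_ S).
by rewrite !inE SA !eqxx => /esym/eqP.
Qed.

Section CycleGraph.
Variables (d : nat) (g : mgraph 'I_d.+1).
Hypothesis g_simple : simple_mgraph g.
Hypothesis g_cycle : forall u v, adj g u v = cycle_adj u v.
Local Notation V := 'I_d.+1.
Implicit Types (u v w : V) (Z S T R : {set V}).

(* The vertex with label [k]; labels beyond [d] wrap around to Y, which makes
   [cyc_next d = Y]. *)
Definition vx (k : nat) : V := inord k.
Definition cyc_prev v : V := vx v.-1.
Definition cyc_next v : V := vx v.+1.

Lemma vxK k : k <= d -> vx k = k :> nat.
Proof. by move=> le_kd; rewrite /vx inordK. Qed.

Lemma vx_ord v : vx v = v.
Proof. by apply: ord_inj; rewrite vxK // -ltnS. Qed.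

Lemma vx_over k : d < k -> vx k = ord0.
Proof. by move=> lt_dk; rewrite /vx /inord /insubd insubN // -leqNgt. Qed.

Lemma cyc_prevE v : cyc_prev v = v.-1 :> nat.
Proof. by rewrite vxK // (leq_trans (leq_pred v)) // -ltnS. Qed.

Lemma cyc_nextE v : cyc_next v = (if v == d :> nat then 0 else v.+1) :> nat.
Proof.
have := ltn_ord v; case: eqP => [vd _ | vd lt_v]; last by rewrite vxK //; lia.
by rewrite /cyc_next vx_over //; lia.
Qed.

Lemma cycle_nbr v w : v != ord0 -> cycle_adj v w -> w = cyc_prev v \/ w = cyc_next v.
Proof.
move=> /negP v0 vw; have := ltn_ord w.
case/or4P: vw => [/eqP wv | /eqP vw | /andP[/eqP v0' _] | /andP[/eqP w0 /eqP vd]] lt_w.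
- by right; apply: ord_inj; rewrite vxK wv.
- by left; apply: ord_inj; rewrite vxK -vw.
- by case: v0; apply/eqP/val_inj.
- by right; rewrite /cyc_next vd vx_over //; apply: ord_inj.
Qed.

Lemma Y_nbr w : cycle_adj ord0 w -> w = vx 1 \/ w = vx d.
Proof.
move=> adj0w; have := ltn_ord w.
case/or4P: adj0w => /= [/eqP w1 | // | /eqP wd | /andP[/eqP w0 /eqP d0]] lt_w.
- by left; apply: ord_inj; rewrite vxK /=; lia.
- by right; apply: ord_inj; rewrite vxK /=; lia.
- by right; apply: ord_inj; rewrite vxK /=; lia.
Qed.

(* [collider v]: both cycle-edges at [v] have an arrowhead at [v].  On any path
   entering and leaving [v] through its two cycle-neighbours, [v] is then a
   collider exactly when [collider v] holds. *)
Definition collider v := arrowhead g (cyc_prev v) v && arrowhead g (cyc_next v) v.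

(* Y is not a collider, as the graph has no loops. *)
Lemma collider_Y : collider ord0 = false.
Proof.
case: g_simple => _ [_ [loops _]]; have /andP[/andP[/negbTE no_dir /negbTE no_bi] _] := loops ord0.
have prev0 : cyc_prev ord0 = ord0 := vx_ord ord0.
by rewrite /collider prev0 /arrowhead no_dir no_bi.
Qed.

(* A collider has no outgoing directed edge: both its edges already carry an
   arrowhead at it and the graph is simple. *)
Lemma collider_no_out v w : collider v -> dir g v w = false.
Proof.
move=> col_v; apply/negbTE/negP => vw.
have v0 : v != ord0 by apply: contraTneq col_v => ->; rewrite collider_Y.
have wv : w != v by apply: contraTneq vw => ->; case: g_simple => _ [_ [/(_ v)/andP[/andP[]]]].
have : adj g v w by rewrite /adj vw.
rewrite g_cycle => /(cycle_nbr v0) w_nbr.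
have ah_wv : arrowhead g w v by case: w_nbr col_v => -> /andP[].
case: g_simple => _ [_ [_ /(_ w v wv)]].
by move: ah_wv; rewrite /arrowhead vw; case: (dir g w v); case: (bi g w v).
Qed.

Lemma collider_anc_set Z v : collider v -> anc_set g Z v = (v \in Z).
Proof.
move=> col_v; apply/existsP/idP => [[z /andP[zZ]] | vZ]; last first.
  by exists v; rewrite vZ /anc connect0.
case/connectP => -[/= _ <- // | w p /=].
by rewrite (collider_no_out _ col_v).
Qed.

(* The vertices (other than Y) that block every path through them given [Z]:
   colliders outside [Z] and non-colliders inside [Z]. *)
Definition blockers Z := [set v | (v != ord0) && ((v \in Z) != collider v)].

Lemma blockers_nonY Z v : v \in blockers Z -> 0 < v.
Proof. by rewrite inE lt0_ord => /andP[]. Qed.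

Lemma pass_blockers Z v : v != ord0 ->
  (if collider v then anc_set g Z v else v \notin Z) = (v \notin blockers Z).
Proof.
move=> v0; rewrite inE v0 /=.
by case: ifP => [/(collider_anc_set Z) -> | _]; case: (v \in Z).
Qed.

Definition walk (f : nat -> V) :=
  [/\ f 0 = ord0, {in [pred i | i <= d] &, injective f},
      forall i, i < d -> cycle_adj (f i) (f i.+1) &
      forall i, 0 < i < d ->
        (f i.-1 = cyc_prev (f i) /\ f i.+1 = cyc_next (f i)) \/
        (f i.-1 = cyc_next (f i) /\ f i.+1 = cyc_prev (f i))].

Lemma walk_nonY f i : walk f -> 0 < i <= d -> f i != ord0.
Proof.
case=> f0 f_inj _ _ /andP[i_gt0 le_id]; rewrite -f0.
by apply: contraTneq i_gt0 => /f_inj ->; rewrite ?inE.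
Qed.

Lemma walk_forced f i w : walk f -> 0 < i < d -> cycle_adj (f i) w ->
  (exists2 j, j < i & w = f j) \/ w = f i.+1.
Proof.
move=> fW i_in adj_w; have fi0 : f i != ord0 by apply: (walk_nonY fW); lia.
have : w = f i.-1 \/ w = f i.+1.
  case: fW => _ _ _ /(_ i i_in).
  by case: (cycle_nbr fi0 adj_w) => -> [[-> ->] | [-> ->]]; tauto.
by case=> ->; [left; exists i.-1 => //; lia | right].
Qed.

Lemma walk_collider f i : walk f -> 0 < i < d ->
  arrowhead g (f i.-1) (f i) && arrowhead g (f i.+1) (f i) = collider (f i).
Proof.
case=> _ _ _ /[apply] -[[-> ->] | [-> ->]] //.
by rewrite /collider andbC.
Qed.

Definition ascend i := vx i.
Definition descend i := vx (d.+1 - i).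

Lemma descendE i : i <= d -> descend i = (if i == 0 then 0 else d.+1 - i) :> nat.
Proof.
case: eqP => [-> | i0] le_id; first by rewrite /descend vx_over.
by rewrite /descend vxK; lia.
Qed.

Lemma walk_ascend : walk ascend.
Proof.
split.
- exact: (vx_ord ord0).
- by move=> i j; rewrite !inE => le_id le_jd /(congr1 val) /=; rewrite !vxK.
- by move=> i lt_id; rewrite /cycle_adj !vxK ?eqxx //; lia.
- move=> i i_in; left; split; apply: ord_inj.
  all: rewrite ?cyc_prevE ?cyc_nextE /ascend !vxK //; try case: eqP; lia.
Qed.

Lemma walk_descend : walk descend.
Proof.
split.
- by rewrite /descend vx_over.
- move=> i j; rewrite !inE => le_id le_jd /(congr1 val) /=.
  by rewrite !descendE //; do 2 case: eqP; lia.
- move=> i lt_id; rewrite /cycle_adj !descendE //; last lia.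
  case: (i =P 0) => [-> | i0] /=; last by apply/or4P; constructor 2; apply/eqP; lia.
  by apply/or3P; constructor 2; apply/eqP; lia.
- move=> i i_in; right; split; apply: ord_inj.
  all: rewrite ?cyc_prevE ?cyc_nextE !descendE; try lia; repeat case: eqP; lia.
Qed.

Definition follows (f : nat -> V) (p : seq V) :=
  forall i, i <= size p -> nth ord0 (ord0 :: p) i = f i.

Lemma follows_tail f p : follows f p -> forall i, i < size p -> nth ord0 p i = f i.+1.
Proof. by move=> pF i lt_ip; rewrite -pF. Qed.

Lemma size_simple_path (p : seq V) : uniq (ord0 :: p) -> size p <= d.
Proof. by move=> pU; have := max_card (mem (ord0 :: p)); rewrite (card_uniqP pU) card_ord. Qed.

Lemma simple_path_follows (p : seq V) : path (adj g) ord0 p -> uniq (ord0 :: p) -> 0 < size p ->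
  follows ascend p \/ follows descend p.
Proof.
move=> pP pU p_gt0; have le_pd := size_simple_path pU.
have follow f : walk f -> nth ord0 p 0 = f 1 -> follows f p.
  move=> fW p0; apply: (forced_path _ pP pU _ p0) => [i y i_in|]; last by case: fW.
  rewrite g_cycle; apply: walk_forced => //.
  by case/andP: i_in => -> /leq_trans; apply.
move/(pathP ord0): pP => /(_ 0 p_gt0); rewrite g_cycle.
case/Y_nbr => p0; [left | right]; apply: follow => //; first exact: walk_ascend.
- exact: walk_descend.
- by rewrite p0 /descend subSS subn0.
Qed.

Definition open_walk f n Z := forall i, 0 < i < n -> f i \notin blockers Z.

Lemma open_walk_mconnected f n Z : walk f -> 0 < n <= d -> open_walk f n Z ->
  mconnected g ord0 (f n) Z.
Proof.
move=> fW n_in fO; case: (fW) => f0 f_inj f_adj _.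
pose p := [seq f i | i <- iota 1 n].
have p_size : size p = n by rewrite size_map size_iota.
have p_full : ord0 :: p = [seq f i | i <- iota 0 n.+1] by rewrite /= f0.
have pF : follows f p.
  by move=> i; rewrite p_size p_full => le_in; rewrite (nth_map 0) ?size_iota ?nth_iota.
exists p; split.
- apply/(pathP ord0) => i; rewrite p_size => lt_in.
  by rewrite (follows_tail pF) ?pF ?p_size ?g_cycle ?f_adj //; lia.
- rewrite p_full map_inj_in_uniq ?iota_uniq // => i j; rewrite !mem_iota => i_in j_in.
  by apply: f_inj; rewrite inE; lia.
- by rewrite -[last _ p]/(last ord0 (ord0 :: p)) -nth_last /= p_size pF ?p_size.
- by rewrite eq_sym (walk_nonY fW).
move=> i; rewrite p_size => i_in /=.
rewrite (follows_tail pF) ?pF ?p_size; try lia.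
by rewrite (walk_collider fW) ?pass_blockers ?(walk_nonY fW) ?fO //; lia.
Qed.

Lemma mconnected_open_walk a Z : mconnected g ord0 a Z ->
  exists2 f, f = ascend \/ f = descend & exists n, [/\ 0 < n <= d, f n = a & open_walk f n Z].
Proof.
case=> p [pP pU p_last Ya p_inner].
have p_gt0 : 0 < size p by case: p p_last {pP pU p_inner} => //= a0; rewrite -a0 eqxx in Ya.
have le_pd := size_simple_path pU.
have along f : walk f -> follows f p -> exists n, [/\ 0 < n <= d, f n = a & open_walk f n Z].
  move=> fW pF; exists (size p); split; first by rewrite p_gt0.
    by rewrite -pF // -p_last -[last _ p]/(last ord0 (ord0 :: p)) -nth_last.
  move=> i /[dup] i_in /andP[i_gt0 lt_ip]; have le_ip := ltnW lt_ip.
  have i_inner : 0 < i < d by rewrite i_gt0 (leq_trans lt_ip le_pd).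
  have fi0 : f i != ord0 by apply: (walk_nonY fW); case/andP: i_inner => -> /ltnW.
  have := p_inner i i_in; rewrite /= (follows_tail pF lt_ip) !pF //; last first.
    exact: leq_trans (leq_pred i) le_ip.
  by rewrite (walk_collider fW i_inner) pass_blockers.
case: (simple_path_follows pP pU p_gt0) => follows_p.
- by exists ascend; [left | exact: along _ walk_ascend follows_p].
- by exists descend; [right | exact: along _ walk_descend follows_p].
Qed.

(* Key characterisation: Y is m-connected to [a] given [Z] iff [a] is not
   strictly between two blockers, i.e. one of the two arcs from Y to [a] is
   free of blockers. *)
Lemma mconnected_iff a Z : a != ord0 -> mconnected g ord0 a Z <-> ~~ between (blockers Z) a.
Proof.
move=> a0; have a_gt0 : 0 < a by rewrite lt0_ord.
have le_ad : a <= d by rewrite -ltnS.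
split.
- case/mconnected_open_walk => f [-> | ->] [n [/andP[n_gt0 le_nd] <- fO]].
  + rewrite negb_and; apply/orP; left; apply/existsP => -[u /andP[uB]].
    rewrite vxK // => lt_un.
    have /negP[] : ascend u \notin blockers Z by apply: fO; rewrite lt_un (blockers_nonY uB).
    by rewrite /ascend vx_ord.
  + rewrite negb_and; apply/orP; right; apply/existsP => -[u /andP[uB]].
    rewrite descendE // gtn_eqF // => lt_nu.
    have /negP[] : descend (d.+1 - u) \notin blockers Z.
      by apply: fO; have := ltn_ord u; lia.
    by rewrite /descend subKn ?vx_ord // ltnW.
- rewrite negb_and => /orP[no_below | no_above].
  + rewrite -(vx_ord a); apply: (open_walk_mconnected walk_ascend); first by rewrite a_gt0.
    move=> i /andP[i_gt0 lt_ia]; apply: contra no_below => iB.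
    by apply/existsP; exists (ascend i); rewrite iB /ascend vxK // (leq_trans (ltnW lt_ia)).
  + have -> : a = descend (d.+1 - a) by rewrite /descend subKn ?vx_ord // ltnW.
    apply: (open_walk_mconnected walk_descend); first by apply/andP; lia.
    move=> i /andP[i_gt0 lt_i]; apply: contra no_above => iB.
    apply/existsP; exists (descend i); rewrite iB descendE ?gtn_eqF //; lia.
Qed.

Lemma msep_Y_iff (A : {set V}) Z : ord0 \notin A ->
  msep g [set ord0] A Z <-> forall a, a \in A -> between (blockers Z) a.
Proof.
move=> A0; split => [sep a aA | inside x y].
- have a0 : a != ord0 by apply: contraNneq A0 => <-.
  by apply/negPn/negP => /(mconnected_iff _ a0); apply: sep aA; rewrite inE.
- rewrite inE => /eqP -> yA; have y0 : y != ord0 by apply: contraNneq A0 => <-.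
  by rewrite mconnected_iff //; apply/negP; rewrite negbK; exact: inside.
Qed.

(* The part of [S] still m-connected to Y given [S] itself; it is a complete
   invariant of the equivalence [simG]. *)
Definition core S := [set x in S | ~~ between (blockers S) x].

Lemma core_subset S : core S \subset S.
Proof. by apply/subsetP => x; rewrite inE => /andP[]. Qed.

Lemma blockers_diff S T x : (x \in blockers S) != (x \in blockers T) -> (x \in S) != (x \in T).
Proof. by rewrite !inE; case: (x \in S); case: (x \in T); case: (x != ord0); case: collider. Qed.

Lemma between_core S : between (blockers (core S)) =1 between (blockers S).
Proof.
move=> x; symmetry; apply: between_eq => y /blockers_diff.
by rewrite inE; case: (y \in S) => //=; rewrite negbK.
Qed.

Lemma core_eq (Sc S : {set V}) : Sc \subset S ->
  (forall a, a \in S :\: Sc -> between (blockers Sc) a) ->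
  core S = core Sc.
Proof.
move=> sub_ScS inside.
have between_S : between (blockers Sc) =1 between (blockers S).
  apply: between_eq => y /blockers_diff.
  case ySc: (y \in Sc); first by rewrite (subsetP sub_ScS).
  by rewrite eq_sym => yS; apply: inside; rewrite inE ySc; move: yS; case: (y \in S).
apply/setP => x; rewrite !inE -between_S.
case xSc: (x \in Sc); first by rewrite (subsetP sub_ScS).
by case xS: (x \in S) => //=; apply/negPn/inside; rewrite !inE xS xSc.
Qed.

Lemma simG_core S T : ord0 \notin S -> ord0 \notin T -> simG g S T <-> core S = core T.
Proof.
move=> S0 T0; have ST0 Sc : ord0 \notin (S :|: T) :\: Sc.
  by rewrite !inE negb_and negb_or S0 T0 orbT.
split.
- case=> Sc [/subsetIP[sub_S sub_T] /(msep_Y_iff _ (ST0 Sc)) inside].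
  have inside_X (X : {set V}) :
      X \subset S :|: T -> forall a, a \in X :\: Sc -> between (blockers Sc) a.
    move=> sub_X a; rewrite inE => /andP[aSc aX].
    by apply: inside; rewrite inE aSc (subsetP sub_X _ aX).
  by rewrite (core_eq sub_S) ?(core_eq sub_T) //; apply: inside_X; rewrite ?subsetUl ?subsetUr.
- move=> core_ST; exists (core S); split.
    by rewrite subsetI {2}core_ST !core_subset.
  apply/(msep_Y_iff _ (ST0 _)) => a; rewrite inE in_setU => /andP[a_core /orP[aS | aT]].
  + by rewrite between_core; move: a_core; rewrite inE aS negbK.
  + by rewrite core_ST between_core; move: a_core; rewrite core_ST inE aT negbK.
Qed.

Definition stable_sets := [set R in Xsubsets d | [forall x in R, ~~ between (blockers R) x]].

Lemma core_image : core @: Xsubsets d = stable_sets.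
Proof.
apply/setP => R; apply/imsetP/idP => [[S S0 ->] | ].
  rewrite inE [_ \in Xsubsets d]inE; apply/andP; split.
    by move: S0; rewrite inE; apply: contra => /(subsetP (core_subset S)).
  by apply/forall_inP => x; rewrite between_core inE => /andP[].
rewrite inE => /andP[R0 /forall_inP stable_R]; exists R => //.
by apply/setP => x; rewrite [x \in core R]inE; case xR: (x \in R); rewrite /= ?stable_R.
Qed.

Lemma blockersK R : ord0 \notin R -> blockers (blockers R) = R.
Proof.
move=> R0; apply/setP => x; rewrite !inE.
have [-> | x0] := eqVneq x ord0; first by rewrite (negbTE R0).
by case: (x \in R); case: collider.
Qed.

Lemma blockers_image : blockers @: stable_sets = coherent_sets collider.
Proof.
apply/setP => D; apply/imsetP/idP => [[R] | ].
  rewrite inE => /andP[R0 /forall_inP stable_R] ->.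
  rewrite !inE eqxx /=; apply/forallP => x; apply/implyP => x_btw.
  case xR: (x \in R); first by move: (stable_R x xR); rewrite x_btw.
  have x0 : x != ord0.
    by rewrite -lt0_ord; case/andP: x_btw => /existsP[u /andP[_ ux]] _; apply: leq_ltn_trans ux.
  by rewrite inE x0 xR; case: collider.
rewrite inE [_ \in Xsubsets d]inE => /andP[D0 /forallP coh_D].
exists (blockers D); last by rewrite blockersK.
rewrite inE [_ \in Xsubsets d]inE inE eqxx /= blockersK //.
apply/forall_inP => x; rewrite inE => /andP[_ x_blk]; apply: contra x_blk => x_btw.
exact: (implyP (coh_D x)).
Qed.

Lemma N_G_coherent : N_G g = #|coherent_sets collider|.
Proof.
rewrite /N_G (card_classes (k := core)) => [|S T]; last by rewrite !inE; exact: simG_core.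
rewrite core_image -blockers_image card_in_imset // => R1 R2.
rewrite !inE => /andP[R1_0 _] /andP[R2_0 _] E.
by rewrite -(blockersK R1_0) E blockersK.
Qed.
End CycleGraph.

Theorem mainTheorem10 (d : nat) (g : mgraph 'I_d.+1) :
  (2 <= d)%N ->
  (is_DAG g \/ is_MAG g) ->
  (forall u v, adj g u v = cycle_adj u v) ->
  (N_G g * 2 = d ^ 2 + d + 2)%N.
Proof.
(* only the simplicity of [g] is used: N_G does not depend on orientations *)
move=> _ g_DAG_or_MAG g_cycle.
have g_simple : simple_mgraph g by case: g_DAG_or_MAG => -[].
rewrite (N_G_coherent g_simple g_cycle) card_coherent_sets.
by have := card_endpoint_pairs d; rewrite -mulnn; lia.
Qed.
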